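(* Consider the problem $$\min_{\pi}\ \mathrm{THR}(\pi)\quad\text{subject to}\quad R(\pi)\ge\lambda .$$ (a) If $\lambda\le\mathbb{E}[Y(0)]$, then $\pi^*_\lambda(X)\equiv 0$ is an optimal ITR, and $\mathrm{THR}(\pi^*_\lambda)=0$. (b) Suppose $\mathbb{E}[\tau(X)\,\mathbb{I}(\mathrm{THR}(X)=0)]>0$. - If $\mathbb{E}[Y(0)]<\lambda\le\mathbb{E}[Y(0)]+\mathbb{E}[\tau(X)\,\mathbb{I}(\mathrm{THR}(X)=0)]$, then $\pi^*_\lambda(X)=\mathbb{I}(\mathrm{THR}(X)=0)$ is an optimal ITR, and $\mathrm{THR}(\pi^*_\lambda)=0$. - If $\mathbb{E}[Y(0)]+\mathbb{E}[\tau(X)\,\mathbb{I}(\mathrm{THR}(X)=0)]<\lambda\le\mathbb{E}[Y(0)]+\mathbb{E}[\tau(X)\,\mathbb{I}(\tau(X)>0)]$, then the optimal ITR is $\pi^*_\lambda(X)=\mathbb{I}(\beta^*\tau(X)-\mathrm{THR}(X)>0)$, where $\beta^*$ satisfies $\mathbb{E}[Y(0)]+\mathbb{E}[\tau(X)\,\mathbb{I}(\beta^*\tau(X)-\mathrm{THR}(X)>0)]=\lambda$. - If $\mathbb{E}[Y(0)]+\mathbb{E}[\tau(X)\,\mathbb{I}(\tau(X)>0)]<\lambda$, then no solution exists. (c) Suppose $\mathbb{E}[\tau(X)\,\mathbb{I}(\mathrm{THR}(X)=0)]\le 0$. - If $\mathbb{E}[Y(0)]<\lambda\le\mathbb{E}[Y(0)]+\mathbb{E}[\tau(X)\,\mathbb{I}(\tau(X)>0)]$,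 then the optimal ITR is $\pi^*_\lambda(X)=\mathbb{I}(\beta^*\tau(X)-\mathrm{THR}(X)>0)$, where $\beta^*$ satisfies $\mathbb{E}[Y(0)]+\mathbb{E}[\tau(X)\,\mathbb{I}(\beta^*\tau(X)-\mathrm{THR}(X)>0)]=\lambda$. - If $\mathbb{E}[Y(0)]+\mathbb{E}[\tau(X)\,\mathbb{I}(\tau(X)>0)]<\lambda$, then no solution exists.
   Context: Setting. Tuples $\{X,A,Y(1),Y(0)\}$ are drawn from a superpopulation, with covariates $X\in\mathcal X$ and binary potential outcomes $Y(a)\in\{0,1\}$. Notation: - $\tau(x)=\mathbb{E}\{Y(1)-Y(0)\mid X=x\}$. - $\mathrm{THR}(x)=\mathbb{P}(Y(0)=1,Y(1)=0\mid X=x)$. - An individualized treatment rule (ITR) is a map $\pi:\mathcal X\to\{0,1\}$. - $R(\pi)=\mathbb{E}[\pi(X)Y(1)+\{1-\pi(X)\}Y(0)]$. - $\mathrm{THR}(\pi)=\mathbb{E}\{\mathrm{THR}(X)\pi(X)\}$. - $\lambda$ is a given threshold. *)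

From HB Require Import structures.
From mathcomp Require Import all_boot all_order all_algebra.
From mathcomp Require Import all_classical all_reals all_analysis.
Set Implicit Arguments. Unset Strict Implicit. Unset Printing Implicit Defensive.
Import Order.TTheory GRing.Theory Num.Theory.
Local Open Scope classical_set_scope.
Local Open Scope ring_scope.
Local Open Scope ereal_scope.

Section ITR.
Context {R : realType} {d d' : measure_display}
  {Omega : measurableType d} {Xt : measurableType d'}.
Variable P : probability Omega R.

Definition cond_exp_version (X : Omega -> Xt) (Z : Omega -> R) (g : Xt -> R) : Prop :=
  measurable_fun setT g /\
  P.-integrable setT (fun w => (g (X w))%:E) /\
  forall B : set Xt, measurable B ->
    \int[P]_(w in X @^-1` B) (Z w)%:E = \int[P]_(w in X @^-1` B) (g (X w))%:E.

Definition is_THR (X : Omega -> Xt) (Y0 Y1 : Omega -> R) (thr : Xt -> R) : Prop :=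
  cond_exp_version X (fun w => ((Y0 w == 1%R) && (Y1 w == 0%R))%:R) thr /\
  (forall x, (0 <= thr x <= 1)%R).

Definition is_tau (X : Omega -> Xt) (Y0 Y1 : Omega -> R) (tau : Xt -> R) : Prop :=
  cond_exp_version X (fun w => Y1 w - Y0 w)%R tau.

Definition ITR (pi : Xt -> bool) : Prop := measurable [set x | pi x].

Definition Rval (X : Omega -> Xt) (Y0 Y1 : Omega -> R) (pi : Xt -> bool) : \bar R :=
  \int[P]_w ((pi (X w))%:R * Y1 w + (1 - (pi (X w))%:R) * Y0 w)%:E.

Definition THRval (X : Omega -> Xt) (thr : Xt -> R) (pi : Xt -> bool) : \bar R :=
  \int[P]_w (thr (X w) * (pi (X w))%:R)%:E.

Definition EY0 (Y0 : Omega -> R) : \bar R := \int[P]_w (Y0 w)%:E.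

Definition Etau_ind (X : Omega -> Xt) (tau : Xt -> R) (S : Xt -> bool) : \bar R :=
  \int[P]_w (tau (X w) * (S (X w))%:R)%:E.

Definition optimal_ITR (X : Omega -> Xt) (Y0 Y1 : Omega -> R) (thr : Xt -> R)
  (lambda : R) (pi : Xt -> bool) : Prop :=
  ITR pi /\ lambda%:E <= Rval X Y0 Y1 pi /\
  forall pi' : Xt -> bool, ITR pi' -> lambda%:E <= Rval X Y0 Y1 pi' ->
    THRval X thr pi <= THRval X thr pi'.

End ITR.

From HB Require Import structures.
From mathcomp Require Import all_boot all_order all_algebra.
From mathcomp Require Import all_classical all_reals all_analysis.
From mathcomp Require Import measurable_realfun ring lra.
Set Implicit Arguments. Unset Strict Implicit. Unset Printing Implicit Defensive.
Import Order.TTheory GRing.Theory Num.Theory.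
Local Open Scope classical_set_scope.
Local Open Scope ring_scope.
Local Open Scope ereal_scope.

(* Since tau is a version of E[Y(1) - Y(0) | X], R(pi) = E[Y(0)] + E[tau(X) pi(X)]
   for every ITR pi: the constraint is linear in pi, while THR(pi) >= 0.  Hence a
   feasible rule treating only units with THR(X) = 0 is optimal, and the bound
   E[tau(X) pi(X)] <= E[tau(X) I(tau(X) > 0)] makes larger lambda infeasible.
   If the threshold rule pi_beta = I(beta tau(X) - THR(X) > 0) meets the constraint
   with equality, then beta > 0 (for beta <= 0 it treats only units with tau < 0),
   and pi_beta minimizes the Lagrangian THR(X) pi(X) - beta tau(X) pi(X) pointwise.
   Integrating, every feasible pi, whose E[tau(X) pi(X)] is at least that of
   pi_beta, satisfies THR(pi) >= THR(pi_beta). *)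

Lemma mulr_bool_le_gt0 (R : realDomainType) (s : R) (q : bool) :
  (s * q%:R <= s * (0 < s)%R%:R)%R.
Proof. by case: q; case: ltrP => /= s0; rewrite ?mulr1 ?mulr0 // ltW. Qed.

Section integral_mul_bool.
Context d (T : measurableType d) (R : realType) (mu : {measure set T -> \bar R}).
Implicit Types (f g : T -> R) (b : T -> bool).

Lemma integral_mul_boolE f b :
  \int[mu]_w (f w * (b w)%:R)%:E = \int[mu]_(w in [set w | b w]) (f w)%:E.
Proof.
rewrite [RHS]integral_mkcond; apply: eq_integral => w _.
rewrite /patch mem_setE unfold_in.
by case: (b w); rewrite ?mulr1 ?mulr0.
Qed.

Lemma integral_mul_bool_eq0 f b : (forall w, b w -> f w = 0%R) ->
  \int[mu]_w (f w * (b w)%:R)%:E = 0.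
Proof.
move=> fb0; rewrite -[RHS](integral0 mu setT); apply: eq_integral => w _.
by case: (boolP (b w)) => [/fb0 ->|_]; rewrite ?mul0r ?mulr0.
Qed.

Lemma integrable_mul_bool f b : measurable [set w | b w] ->
  mu.-integrable setT (EFin \o f) ->
  mu.-integrable setT (fun w => (f w * (b w)%:R)%:E).
Proof.
move=> mb intf; apply: (le_integrable measurableT (g := EFin \o f)) => //.
- apply/measurable_EFinP/measurable_funM.
    by case/integrableP: intf => /measurable_EFinP.
  apply: (eq_measurable_fun (\1_[set w | b w] : T -> R)) => [w _|].
    by rewrite indicE mem_setE unfold_in.
  exact: measurable_indic.
- move=> w _; rewrite lee_fin normrM.
  by case: (b w); rewrite ?normr1 ?mulr1 ?normr0 ?mulr0.
Qed.

Lemma le_integral_mul_bool f b b' :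
  measurable [set w | b w] -> measurable [set w | b' w] ->
  mu.-integrable setT (EFin \o f) ->
  (forall w, f w * (b w)%:R <= f w * (b' w)%:R)%R ->
  \int[mu]_w (f w * (b w)%:R)%:E <= \int[mu]_w (f w * (b' w)%:R)%:E.
Proof.
move=> mb mb' intf fbb'.
by apply: le_integral => // [||w _]; [exact: integrable_mul_bool..|rewrite lee_fin].
Qed.

Lemma integral_mul_boolB f g (k : R) b : measurable [set w | b w] ->
  mu.-integrable setT (EFin \o f) -> mu.-integrable setT (EFin \o g) ->
  \int[mu]_w (f w * (b w)%:R)%:E - k%:E * \int[mu]_w (g w * (b w)%:R)%:E =
  \int[mu]_w ((f w - k * g w) * (b w)%:R)%:E.
Proof.
move=> mb intf intg; have intgb := integrable_mul_bool mb intg.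
rewrite -integralZl // -integralB //; last exact: integrableZl.
  by apply: eq_integral => w _; rewrite -EFinM -EFinB mulrBl mulrA.
exact: integrable_mul_bool.
Qed.

End integral_mul_bool.

Lemma integrable_bounded d (T : measurableType d) (R : realType)
    (mu : {finite_measure set T -> \bar R}) (f : T -> R) (c : R) :
  measurable_fun setT f -> (forall w, `|f w| <= c)%R ->
  mu.-integrable setT (EFin \o f).
Proof.
move=> mf fc; apply: (le_integrable measurableT (g := EFin \o cst c)).
- exact/measurable_EFinP.
- by move=> w _ /=; rewrite lee_fin (le_trans (fc w) (ler_norm c)).
- exact: finite_measure_integrable_cst.
Qed.

Lemma ITR_measurable_fun d (T : measurableType d) (pi : T -> bool) :
  measurable_fun setT pi -> ITR pi.
Proof.
move=> mpi; have := mpi measurableT [set true] I; rewrite setTI /ITR.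
by congr measurable; apply/seteqP; split => x /=.
Qed.

Section threshold_rule.
Context (R : realType) (d d' : measure_display)
  (Omega : measurableType d) (Xt : measurableType d')
  (P : probability Omega R) (X : Omega -> Xt) (Y0 Y1 : Omega -> R)
  (tau thr : Xt -> R).
Hypotheses (mX : measurable_fun setT X)
  (mY0 : measurable_fun setT Y0) (mY1 : measurable_fun setT Y1)
  (Y0_01 : forall w, Y0 w = 0%R \/ Y0 w = 1%R)
  (Y1_01 : forall w, Y1 w = 0%R \/ Y1 w = 1%R)
  (htau : is_tau P X Y0 Y1 tau) (hthr : is_THR P X Y0 Y1 thr).

Local Notation E0 := (EY0 P Y0).
Local Notation Etau := (Etau_ind P X tau).
Local Notation THR := (THRval P X thr).

Definition threshold_rule (beta : R) (x : Xt) : bool := (0 < beta * tau x - thr x)%R.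

Lemma measurable_preimage_ITR pi : ITR pi -> measurable [set w | pi (X w)].
Proof. by move=> hpi; have := mX measurableT hpi; rewrite setTI. Qed.

Lemma measurable_tau : measurable_fun setT tau. Proof. by case: htau. Qed.
Lemma measurable_thr : measurable_fun setT thr. Proof. by case: hthr => -[]. Qed.

Lemma thr_ge0 x : (0 <= thr x)%R.
Proof. by case: hthr => _ /(_ x) /andP[]. Qed.

Lemma ITR_threshold_rule beta : ITR (threshold_rule beta).
Proof.
apply/ITR_measurable_fun/measurable_fun_ltr => //.
apply: measurable_funB; last exact: measurable_thr.
by apply: measurable_funM => //; exact: measurable_tau.
Qed.

Lemma integrable_binary (Y : Omega -> R) : measurable_fun setT Y ->
  (forall w, Y w = 0%R \/ Y w = 1%R) -> P.-integrable setT (EFin \o Y).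
Proof.
move=> mY Y01; apply: (integrable_bounded _ mY (c := 1%R)) => w.
by case: (Y01 w) => ->; rewrite ?normr0 ?normr1.
Qed.

Lemma integrable_tauX : P.-integrable setT (EFin \o (tau \o X)).
Proof. by case: htau => _ []. Qed.

Lemma integrable_thrX : P.-integrable setT (EFin \o (thr \o X)).
Proof.
apply: (integrable_bounded _ _ (c := 1%R)) => [|w /=].
  exact: measurableT_comp measurable_thr mX.
by case: hthr => _ /(_ (X w)) /andP[? ?]; rewrite ger0_norm.
Qed.

Lemma EY0_fin_num : E0 \is a fin_num.
Proof. by apply: integrable_fin_num => //; exact: integrable_binary. Qed.

Lemma Etau_fin_num pi : ITR pi -> Etau pi \is a fin_num.
Proof.
move=> hpi; apply: integrable_fin_num => //.
exact: integrable_mul_bool (measurable_preimage_ITR hpi) integrable_tauX.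
Qed.

Lemma THRval_fin_num pi : ITR pi -> THR pi \is a fin_num.
Proof.
move=> hpi; apply: integrable_fin_num => //.
exact: integrable_mul_bool (measurable_preimage_ITR hpi) integrable_thrX.
Qed.

Lemma THRval_ge0 pi : 0 <= THR pi.
Proof. by apply: integral_ge0 => w _; rewrite lee_fin mulr_ge0 ?thr_ge0. Qed.

Lemma Rval_ITR pi : ITR pi -> Rval P X Y0 Y1 pi = E0 + Etau pi.
Proof.
move=> hpi; have mpi := measurable_preimage_ITR hpi.
have iY0 := integrable_binary mY0 Y0_01; have iY1 := integrable_binary mY1 Y1_01.
have iY10 : P.-integrable setT (EFin \o (fun w => Y1 w - Y0 w)%R).
  apply: (eq_integrable measurableT ((EFin \o Y1) \- (EFin \o Y0))) => [w _|].
    by rewrite /= EFinB.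
  exact: integrableB.
transitivity (\int[P]_w ((Y0 w)%:E + ((Y1 w - Y0 w) * (pi (X w))%:R)%:E)).
  by apply: eq_integral => w _; rewrite -EFinD; congr EFin; ring.
rewrite integralD //; last exact: integrable_mul_bool.
rewrite /Etau_ind !integral_mul_boolE.
by congr (_ + _); case: htau => _ [_ tau_cond]; exact: tau_cond [set x | pi x] hpi.
Qed.

Lemma Etau_le_Etau_pos pi : ITR pi -> Etau pi <= Etau (fun x => (0 < tau x)%R).
Proof.
move=> hpi; apply: le_integral_mul_bool integrable_tauX _ => //.
- exact: measurable_preimage_ITR.
- apply: (measurable_preimage_ITR (pi := fun x => 0 < tau x)%R).
  by apply/ITR_measurable_fun/measurable_fun_ltr => //; exact: measurable_tau.
- by move=> w; apply: mulr_bool_le_gt0.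
Qed.

Lemma Etau_threshold_rule_le0 beta : (beta <= 0)%R -> Etau (threshold_rule beta) <= 0.
Proof.
move=> beta_le0.
rewrite -(integral_mul_bool_eq0 P (f := tau \o X) (b := fun _ => false)) //.
apply: le_integral_mul_bool integrable_tauX _ => //.
- exact/measurable_preimage_ITR/ITR_threshold_rule.
- by apply: (measurable_preimage_ITR (pi := fun _ => false)); exact: ITR_measurable_fun.
- move=> w /=; rewrite /threshold_rule mulr0.
  by have := thr_ge0 (X w); case: ltrP => /= ? ?; nra.
Qed.

Lemma threshold_rule_lagrangian beta pi : ITR pi ->
  THR (threshold_rule beta) - beta%:E * Etau (threshold_rule beta)
  <= THR pi - beta%:E * Etau pi.
Proof.
move=> hpi; have mpb := measurable_preimage_ITR (ITR_threshold_rule beta).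
have mpi := measurable_preimage_ITR hpi.
rewrite /THRval /Etau_ind !(integral_mul_boolB _ _ integrable_thrX integrable_tauX) //.
apply: le_integral_mul_bool => // [|w].
  apply: (eq_integrable measurableT
    ((EFin \o (thr \o X)) \- (fun w => beta%:E * (EFin \o (tau \o X)) w))) => [w _|].
    by rewrite /= EFinB EFinM.
  apply: integrableB => //; first exact: integrable_thrX.
  by apply: integrableZl => //; exact: integrable_tauX.
rewrite /threshold_rule -[(thr _ - _)%R]opprB !mulNr lerN2.
exact: mulr_bool_le_gt0.
Qed.

Lemma optimal_ITR_THRval_eq0 lambda pi : ITR pi -> lambda%:E <= E0 + Etau pi ->
  (forall x, pi x -> thr x = 0%R) ->
  optimal_ITR P X Y0 Y1 thr lambda pi /\ THR pi = 0.
Proof.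
move=> hpi hl pi_thr0.
have THR0 : THR pi = 0 by apply: integral_mul_bool_eq0 => w; exact: pi_thr0.
split=> //; split=> //; split; first by rewrite Rval_ITR.
by move=> pi' _ _; rewrite THR0 THRval_ge0.
Qed.

Lemma no_optimal_ITR lambda : E0 + Etau (fun x => (0 < tau x)%R) < lambda%:E ->
  ~ exists pi, optimal_ITR P X Y0 Y1 thr lambda pi.
Proof.
move=> hl [pi [hpi [hR _]]]; move: hR; rewrite Rval_ITR //.
apply/negP; rewrite -ltNge; apply: le_lt_trans hl.
by apply: leeD2l; exact: Etau_le_Etau_pos.
Qed.

Lemma threshold_rule_optimal lambda beta : E0 < lambda%:E ->
  E0 + Etau (threshold_rule beta) = lambda%:E ->
  optimal_ITR P X Y0 Y1 thr lambda (threshold_rule beta).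
Proof.
move=> E0_lt_l hb; have hpb := ITR_threshold_rule beta.
split=> //; split; first by rewrite Rval_ITR // hb.
move=> pi hpi; rewrite Rval_ITR // -hb leeD2lE ?EY0_fin_num // => Etau_le.
have beta_gt0 : (0 < beta)%R.
  rewrite ltNge; apply/negP => /Etau_threshold_rule_le0 Etau_le0.
  move: E0_lt_l; rewrite -hb -[E0 in E0 < _]adde0 lteD2lE ?EY0_fin_num //.
  by rewrite ltNge Etau_le0.
have := threshold_rule_lagrangian beta hpi.
move: Etau_le.
have /EFin_fin_numP[t1 ->] := THRval_fin_num hpb.
have /EFin_fin_numP[t2 ->] := THRval_fin_num hpi.
have /EFin_fin_numP[a1 ->] := Etau_fin_num hpb.
have /EFin_fin_numP[a2 ->] := Etau_fin_num hpi.
rewrite -!EFinM -!EFinB !lee_fin; nra.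
Qed.

End threshold_rule.

Theorem theoremS1 (R : realType) (d d' : measure_display)
  (Omega : measurableType d) (Xt : measurableType d')
  (P : probability Omega R) (X : Omega -> Xt) (Y0 Y1 : Omega -> R)
  (tau thr : Xt -> R) (lambda : R)
  (hX : measurable_fun setT X)
  (hY0 : measurable_fun setT Y0) (hY1 : measurable_fun setT Y1)
  (hY0b : forall w, Y0 w = 0%R \/ Y0 w = 1%R)
  (hY1b : forall w, Y1 w = 0%R \/ Y1 w = 1%R)
  (htau : is_tau P X Y0 Y1 tau) (hthr : is_THR P X Y0 Y1 thr) :
  let E0 := EY0 P Y0 in
  let Ez := Etau_ind P X tau (fun x => thr x == 0%R) in
  let Epos := Etau_ind P X tau (fun x => (0 < tau x)%R) in
  let pibeta := fun beta : R => (fun x => (0 < beta * tau x - thr x)%R) in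
  (* (a) *)
  (lambda%:E <= E0 ->
     optimal_ITR P X Y0 Y1 thr lambda (fun _ => false) /\
     THRval P X thr (fun _ => false) = 0) /\
  (* (b) *)
  (0 < Ez ->
     (E0 < lambda%:E <= E0 + Ez ->
        optimal_ITR P X Y0 Y1 thr lambda (fun x => thr x == 0%R) /\
        THRval P X thr (fun x => thr x == 0%R) = 0) /\
     (E0 + Ez < lambda%:E <= E0 + Epos ->
        forall beta : R, E0 + Etau_ind P X tau (pibeta beta) = lambda%:E ->
        optimal_ITR P X Y0 Y1 thr lambda (pibeta beta)) /\
     (E0 + Epos < lambda%:E ->
        ~ exists pi, optimal_ITR P X Y0 Y1 thr lambda pi)) /\
  (* (c) *)
  (Ez <= 0 ->
     (E0 < lambda%:E <= E0 + Epos ->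
        forall beta : R, E0 + Etau_ind P X tau (pibeta beta) = lambda%:E ->
        optimal_ITR P X Y0 Y1 thr lambda (pibeta beta)) /\
     (E0 + Epos < lambda%:E ->
        ~ exists pi, optimal_ITR P X Y0 Y1 thr lambda pi)).
Proof.
move=> E0 Ez Epos pibeta.
have opt_THR0 := optimal_ITR_THRval_eq0 hX hY0 hY1 hY0b hY1b htau hthr.
have opt_threshold := threshold_rule_optimal hX hY0 hY1 hY0b hY1b htau hthr.
have no_opt := no_optimal_ITR (thr := thr) hX hY0 hY1 hY0b hY1b htau.
have never_ITR : ITR (fun _ : Xt => false) by apply: ITR_measurable_fun.
have thr0_ITR : ITR (fun x => thr x == 0%R).
  exact/ITR_measurable_fun/measurable_fun_eqr/measurable_cst/(measurable_thr hthr).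
split; [|split].
- move=> l_le_E0; apply: opt_THR0 => //.
  by rewrite /Etau_ind (integral_mul_bool_eq0 P (b := fun _ => false)) // adde0.
- move=> Ez_gt0; split; [|split; last exact: no_opt].
  + by case/andP=> _ l_le; apply: opt_THR0 => // x /eqP.
  + case/andP=> l_gt _ beta; apply: opt_threshold; apply: lt_trans l_gt.
    by rewrite lteDl // (EY0_fin_num _ hY0 hY0b).
- move=> _; split; last exact: no_opt.
  by case/andP=> l_gt _ beta; apply: opt_threshold.
Qed.
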